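(* Let $n=2k+1$ with $k\ge 1$. Then $W=\{a_1,a_{k+1}\}$ is a local resolving set of $U_n$.
   Context: For $n\ge 3$, $U_n$ is the graph with vertex set $\{a_i,b_i,c_i,d_i,e_i : 1\le i\le n\}$ and edge set $\{a_ia_{i+1}, b_ib_{i+1}, e_ie_{i+1}, a_ib_i, b_ic_i, c_id_i, d_ie_i, c_{i+1}d_i : 1\le i\le n\}$, indices taken modulo $n$. A vertex $w$ resolves $u,v$ if $d(u,w)\neq d(v,w)$ ($d$ the graph distance). A set $W$ is a local resolving set if every two adjacent vertices are resolved by some element of $W$. *)

From mathcomp Require Import all_boot.
Set Implicit Arguments. Unset Strict Implicit. Unset Printing Implicit Defensive.

Section Graph.
Variable V : finType.
Variable adj : rel V.

Definition walkb (u v : V) (m : nat) : bool :=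
  [exists p : m.-tuple V, path adj u p && (last u p == v)].

(* graph distance: the least m with a walk of length m from u to v.
   (Shortest walks have length < #|V|; if v is unreachable the value is #|V|,
   which never happens for the connected graphs considered here.) *)
Definition gdist (u v : V) : nat := find (walkb u v) (iota 0 #|V|).

Definition resolves (w u v : V) : Prop := gdist u w <> gdist v w.

Definition local_resolving (W : {set V}) : Prop :=
  forall u v : V, adj u v -> exists2 w, w \in W & resolves w u v.
End Graph.

(* Vertex (p, i) with p : 'I_5 encodes the letter (0=a,1=b,2=c,3=d,4=e) and
   i : 'I_n encodes the index, 0-based: (p,i) stands for x_{i+1}. *)
Definition Uvert (n : nat) := ('I_5 * 'I_n)%type.

Definition isucc (n : nat) (i j : 'I_n) : bool := (j : nat) == (i.+1 %% n).

Definition Uarc (n : nat) (x y : Uvert n) : bool :=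
  let p : nat := x.1 in let i := x.2 in
  let q : nat := y.1 in let j := y.2 in
  [|| [&& p == 0, q == 0 & isucc i j],
      [&& p == 1, q == 1 & isucc i j],
      [&& p == 4, q == 4 & isucc i j],
      [&& p == 0, q == 1 & i == j],
      [&& p == 1, q == 2 & i == j],
      [&& p == 2, q == 3 & i == j],
      [&& p == 3, q == 4 & i == j]
    | [&& p == 3, q == 2 & isucc i j]].

Definition Uadj (n : nat) : rel (Uvert n) := fun x y => Uarc x y || Uarc y x.

Definition vA (n : nat) (i : 'I_n) : Uvert n := (ord0, i).

From mathcomp Require Import all_boot zify.

(* The distance from a_j is an explicit potential built from the distance D to
   j on the a-cycle: D i, D i + 1, D i + 2 at a_i, b_i, c_i, and
   min (D i) (D (i+1)) + 3, + 4 at d_i, e_i.  It is the graph distance because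
   it is 1-Lipschitz along edges, vanishes only at a_j, and can always be
   decreased by one along an edge.  For n = 2k+1, the cycle distance to index 0
   increases on [0, k] and decreases on [k, 2k], whereas the distance to index k
   does the opposite, with its only flat step at the antipode 2k; comparing the
   two potentials edge type by edge type, at least one changes on every edge. *)

Lemma find_iota0 (P : pred nat) (m N : nat) :
  m < N -> P m -> (forall i, i < m -> ~~ P i) -> find P (iota 0 N) = m.
Proof.
move=> ltmN Pm notP.
have -> : iota 0 N = iota 0 m ++ m :: iota m.+1 (N - m.+1).
  have -> : N = m + (N - m.+1).+1 by lia.
  by rewrite iotaD /= add0n; do 3 f_equal; lia.
rewrite find_cat size_iota /= Pm addn0.
have /negbTE -> // : ~~ has P (iota 0 m).
by apply/hasPn => i; rewrite mem_iota => /andP [_ lt_im]; apply: notP.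
Qed.

Section DistancePotential.
Variables (V : finType) (adj : rel V) (f : V -> nat) (w : V).
Hypothesis f_lipschitz : forall x y, adj x y -> f x <= f y + 1.
Hypothesis f_eq0 : forall x, f x = 0 -> x = w.
Hypothesis f_w : f w = 0.
Hypothesis f_descent : forall x, 0 < f x -> exists2 y, adj x y & f y = (f x).-1.

Lemma walkb_potential (x : V) : walkb adj x w (f x).
Proof.
have walk_down (m : nat) (y : V) :
    f y = m -> exists p : seq V, [/\ size p = m, path adj y p & last y p = w].
  elim: m y => [|m IHm] y fy; first by exists [::]; split => //; apply: f_eq0.
  have [|z yz fz] := f_descent y; first by rewrite fy.
  have [|p [size_p path_p last_p]] := IHm z; first by rewrite fz fy.
  by exists (z :: p); split; rewrite /= ?size_p ?yz.
have [p [size_p path_p last_p]] := walk_down _ x erefl.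
apply/existsP; exists (@Tuple _ _ p (introT eqP size_p)).
by rewrite /= path_p last_p eqxx.
Qed.

Lemma potential_le_walk (x : V) (p : seq V) :
  path adj x p -> f x <= size p + f (last x p).
Proof.
elim: p x => [|y p IHp] x /=; first by [].
by case/andP=> /f_lipschitz fxy /IHp; lia.
Qed.

Lemma gdist_potential (u : V) : f u < #|V| -> gdist adj u w = f u.
Proof.
move=> fu_lt; apply: find_iota0 => //; first exact: walkb_potential.
move=> i lt_i_fu; apply/existsP=> -[p /andP [/potential_le_walk le_fu /eqP last_p]].
by move: le_fu; rewrite last_p f_w size_tuple; lia.
Qed.

End DistancePotential.

Lemma modS_cases {n i : nat} : i < n ->
  (i.+1 %% n = i.+1 /\ i.+1 < n) \/ (i.+1 %% n = 0 /\ i.+1 = n).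
Proof.
move=> lt_in; case: (ltnP i.+1 n) => [lt_Sin|le_nSi]; first by left; rewrite modn_small.
have eq_Sin : i.+1 = n by lia.
by right; rewrite eq_Sin modnn.
Qed.

Section UPotential.
Variables (n : nat) (D : nat -> nat).

Definition Upot (x : Uvert n) : nat :=
  match (x.1 : nat) with
  | 0 => D x.2
  | 1 => D x.2 + 1
  | 2 => D x.2 + 2
  | 3 => minn (D x.2) (D (x.2.+1 %% n)) + 3
  | _ => minn (D x.2) (D (x.2.+1 %% n)) + 4
  end.

Hypothesis D_step :
  forall i : 'I_n, D (i.+1 %% n) <= D i + 1 /\ D i <= D (i.+1 %% n) + 1.

Lemma Upot_arc (x y : Uvert n) :
  Uarc x y -> Upot x <= Upot y + 1 /\ Upot y <= Upot x + 1.
Proof.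
case: x y => [p i] [q j]; rewrite /Uarc /isucc /Upot /= => arc.
have := D_step i; have := D_step j.
by repeat case/orP: arc => arc; case/and3P: arc => /eqP-> /eqP-> /eqP eq_ij;
  try subst j; try rewrite eq_ij; lia.
Qed.

Lemma Upot_lipschitz (x y : Uvert n) : Uadj x y -> Upot x <= Upot y + 1.
Proof. by case/orP=> /Upot_arc; lia. Qed.

Hypothesis D_descent : forall i : 'I_n, 0 < D i ->
  exists2 i' : 'I_n, isucc i i' || isucc i' i & D i' = (D i).-1.

Lemma Upot_descent (x : Uvert n) :
  0 < Upot x -> exists2 y, Uadj x y & Upot y = (Upot x).-1.
Proof.
case: x => [[[|[|[|[|[|p]]]]] lt_p5] i]; rewrite /Upot /= => pot_gt0.
- have [i' ii' Di'] := D_descent _ pot_gt0.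
  exists (ord0, i') => //; rewrite /Uadj /Uarc /=.
  by case/orP: ii' => ->; rewrite ?orbT.
- exists (ord0, i); last by rewrite /Upot /=; lia.
  by rewrite /Uadj /Uarc /= eqxx ?orbT.
- exists (@Ordinal 5 1 isT, i); last by rewrite /Upot /=; lia.
  by rewrite /Uadj /Uarc /= eqxx ?orbT.
- have n_gt0 : 0 < n by apply: leq_ltn_trans (ltn_ord i).
  case: (leqP (D i) (D (i.+1 %% n))) => D_le.
  + exists (@Ordinal 5 2 isT, i); last by rewrite /Upot /=; lia.
    by rewrite /Uadj /Uarc /= eqxx ?orbT.
  + exists (@Ordinal 5 2 isT, Ordinal (ltn_pmod i.+1 n_gt0)); last by rewrite /Upot /=; lia.
    by rewrite /Uadj /Uarc /isucc /= eqxx ?orbT.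
- exists (@Ordinal 5 3 isT, i); last by rewrite /Upot /=; lia.
  by rewrite /Uadj /Uarc /= eqxx ?orbT.
- by [].
Qed.

Variable j : 'I_n.
Hypothesis D_eq0 : forall i : 'I_n, D i = 0 -> i = j.
Hypothesis D_j : D j = 0.
Hypothesis D_lt : forall i : 'I_n, D i < n.

Lemma Upot_eq0 (x : Uvert n) : Upot x = 0 -> x = vA j.
Proof.
case: x => [[[|[|[|[|[|p]]]]] lt_p5] i]; rewrite /Upot /= => pot0; try lia.
by rewrite (D_eq0 _ pot0); congr pair; apply: val_inj.
Qed.

Lemma gdist_Upot (u : Uvert n) : gdist (@Uadj n) u (vA j) = Upot u.
Proof.
apply: gdist_potential.
- exact: Upot_lipschitz.
- exact: Upot_eq0.
- by rewrite /Upot /= D_j.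
- exact: Upot_descent.
have Upot_le : Upot u <= D u.2 + 4.
  by case: u => [[[|[|[|[|[|p]]]]] lt_p5] i]; rewrite /Upot /=; lia.
by rewrite card_prod !card_ord; have := D_lt u.2; lia.
Qed.

End UPotential.

Arguments Upot {n} D x.

Definition cdist0 (n i : nat) : nat := minn i (n - i).

Section CycleDistanceFromZero.
Variable m : nat.
Local Notation n := m.+1.

Lemma cdist0_step (i : 'I_n) :
  cdist0 n (i.+1 %% n) <= cdist0 n i + 1 /\ cdist0 n i <= cdist0 n (i.+1 %% n) + 1.
Proof. by rewrite /cdist0; have [[-> ?]|[-> ?]] := modS_cases (ltn_ord i); lia. Qed.

Lemma cdist0_descent (i : 'I_n) : 0 < cdist0 n i ->
  exists2 i' : 'I_n, isucc i i' || isucc i' i & cdist0 n i' = (cdist0 n i).-1.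
Proof.
have lt_in := ltn_ord i; rewrite /cdist0 /isucc => dist_gt0.
case: (leqP i (n - i)) => [near0|far0].
- exists (inord i.-1); rewrite inordK; try lia.
  by rewrite (modn_small (_ : i.-1.+1 < n)) ?orbT; lia.
- exists (inord (i.+1 %% n)); rewrite inordK ?ltn_pmod ?eqxx //.
  by have [[-> ?]|[-> ?]] := modS_cases lt_in; lia.
Qed.

Lemma gdist_a1 (u : Uvert n) :
  gdist (@Uadj n) u (vA (inord 0)) = Upot (cdist0 n) u.
Proof.
apply: gdist_Upot.
- exact: cdist0_step.
- exact: cdist0_descent.
- move=> i; rewrite /cdist0 => dist0; apply: val_inj; rewrite /= inordK //.
  by have := ltn_ord i; lia.
- by rewrite /cdist0 inordK.
- by move=> i; rewrite /cdist0; have := ltn_ord i; lia.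
Qed.

End CycleDistanceFromZero.

Section OddCycle.
Variable k : nat.
Hypothesis k_gt0 : 0 < k.
Local Notation n := (2 * k).+1.

(* On the cycle of odd length 2k+1 the distance to k is |i - k|: no shortcut
   around the cycle is ever shorter. *)
Definition cdistk (i : nat) : nat := (i - k) + (k - i).

Lemma cdistk_step (i : 'I_n) :
  cdistk (i.+1 %% n) <= cdistk i + 1 /\ cdistk i <= cdistk (i.+1 %% n) + 1.
Proof. by rewrite /cdistk; have [[-> ?]|[-> ?]] := modS_cases (ltn_ord i); lia. Qed.

Lemma cdistk_descent (i : 'I_n) : 0 < cdistk i ->
  exists2 i' : 'I_n, isucc i i' || isucc i' i & cdistk i' = (cdistk i).-1.
Proof.
have lt_in := ltn_ord i; rewrite /cdistk /isucc => dist_gt0.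
case: (leqP k i) => [ge_ik|lt_ik].
- exists (inord i.-1); rewrite inordK; try lia.
  by rewrite (modn_small (_ : i.-1.+1 < n)) ?orbT; lia.
- exists (inord (i.+1 %% n)); rewrite inordK ?ltn_pmod ?eqxx //.
  by have [[-> ?]|[-> ?]] := modS_cases lt_in; lia.
Qed.

Lemma gdist_ak (u : Uvert n) :
  gdist (@Uadj n) u (vA (inord k)) = Upot cdistk u.
Proof.
apply: gdist_Upot.
- exact: cdistk_step.
- exact: cdistk_descent.
- move=> i; rewrite /cdistk => dist0; apply: val_inj.
  by rewrite /= inordK; have := ltn_ord i; lia.
- by rewrite /cdistk inordK; lia.
- by move=> i; rewrite /cdistk; have := ltn_ord i; lia.
Qed.

Local Notation succ i := (i.+1 %% n).

Lemma cdist0_succ_eq (i : 'I_n) : cdist0 n (succ i) = cdist0 n i -> i = k :> nat.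
Proof. by rewrite /cdist0; have [[-> ?]|[-> ?]] := modS_cases (ltn_ord i); lia. Qed.

Lemma cdistk_succ_eq (i : 'I_n) : cdistk (succ i) = cdistk i -> i = 2 * k :> nat.
Proof. by rewrite /cdistk; have [[-> ?]|[-> ?]] := modS_cases (ltn_ord i); lia. Qed.

Lemma cdist0_succ_lt (i : 'I_n) : cdist0 n (succ i) < cdist0 n i -> k < i.
Proof. by rewrite /cdist0; have [[-> ?]|[-> ?]] := modS_cases (ltn_ord i); lia. Qed.

Lemma cdistk_succ_lt (i : 'I_n) : cdistk (succ i) < cdistk i -> i < k.
Proof. by rewrite /cdistk; have [[-> ?]|[-> ?]] := modS_cases (ltn_ord i); lia. Qed.

Lemma cdist0_lt_succ (i : 'I_n) : cdist0 n i < cdist0 n (succ i) -> i < k.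
Proof. by rewrite /cdist0; have [[-> ?]|[-> ?]] := modS_cases (ltn_ord i); lia. Qed.

Lemma cdistk_lt_succ (i : 'I_n) : cdistk i < cdistk (succ i) -> k <= i.
Proof. by rewrite /cdistk; have [[-> ?]|[-> ?]] := modS_cases (ltn_ord i); lia. Qed.

Lemma cdist0_min_succ (i : 'I_n) :
  minn (cdist0 n i) (cdist0 n (succ i)) = minn (cdist0 n (succ i)) (cdist0 n (succ (succ i))) ->
  i = 2 * k :> nat.
Proof.
rewrite /cdist0; have [[-> lt_Sin]|[-> ?]] := modS_cases (ltn_ord i).
- by have [[-> ?]|[-> ?]] := modS_cases lt_Sin; lia.
- by rewrite modn_small; lia.
Qed.

Lemma cdistk_min_succ (i : 'I_n) :
  minn (cdistk i) (cdistk (succ i)) = minn (cdistk (succ i)) (cdistk (succ (succ i))) ->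
  i = k.-1 :> nat.
Proof.
rewrite /cdistk; have [[-> lt_Sin]|[-> ?]] := modS_cases (ltn_ord i).
- by have [[-> ?]|[-> ?]] := modS_cases lt_Sin; lia.
- by rewrite modn_small; lia.
Qed.

Lemma Uarc_resolved (x y : Uvert n) : Uarc x y ->
  Upot (cdist0 n) x <> Upot (cdist0 n) y \/ Upot cdistk x <> Upot cdistk y.
Proof.
case: x y => [p i] [q j]; rewrite /Uarc /isucc /Upot /= => arc.
repeat case/orP: arc => arc; case/and3P: arc => /eqP-> /eqP-> /eqP eq_ij;
  try subst j; try rewrite eq_ij.
- by have := cdist0_succ_eq i; have := cdistk_succ_eq i; lia.
- by have := cdist0_succ_eq i; have := cdistk_succ_eq i; lia.
- by have := cdist0_min_succ i; have := cdistk_min_succ i; lia.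
- by left; lia.
- by left; lia.
- by have := cdist0_succ_lt i; have := cdistk_succ_lt i; lia.
- by left; lia.
- by have := cdist0_lt_succ i; have := cdistk_lt_succ i; lia.
Qed.

Lemma Uadj_resolved (x y : Uvert n) : Uadj x y ->
  Upot (cdist0 n) x <> Upot (cdist0 n) y \/ Upot cdistk x <> Upot cdistk y.
Proof.
case/orP=> [/Uarc_resolved //|/Uarc_resolved].
by case=> neq; [left|right] => eq_xy; apply: neq.
Qed.

End OddCycle.

Theorem lemma4p3 (k : nat) (hk : 1 <= k) :
  local_resolving (@Uadj (2 * k).+1)
    [set vA (inord 0 : 'I_(2 * k).+1); vA (inord k : 'I_(2 * k).+1)].
Proof.
move=> u v /(@Uadj_resolved k hk) [res_a1|res_ak].
- exists (vA (inord 0)); first by rewrite !inE eqxx.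
  by rewrite /resolves !gdist_a1.
- exists (vA (inord k)); first by rewrite !inE eqxx orbT.
  by rewrite /resolves !gdist_ak.
Qed.
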